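(* Under the curve flow $\gamma_t=\gamma''-\tfrac23k_1\gamma$, one has $(k_1)_t=D(k_1'+2k_2)$, so $\int k_1\,\mathrm{d}x$ is conserved.
   Context: $\gamma(x,t)$ is a family of nondegenerate curves in centroaffine $\mathbb R^3$ parametrized by centroaffine arclength $x$ ($\det(\gamma,\gamma',\gamma'')=1$), with invariants $k_1,k_2$ defined by $\gamma'''=(k_1\gamma)'+k_2\gamma$; $D=\partial/\partial x$. *)

From Stdlib Require Import Reals List.
From Coquelicot Require Import Coquelicot.
Open Scope R_scope.

Definition Pdx (f : R -> R -> R) : R -> R -> R :=
  fun x t => Derive (fun y => f y t) x.
Definition Pdt (f : R -> R -> R) : R -> R -> R :=
  fun x t => Derive (fun s => f x s) t.

Fixpoint dapply (l : list bool) (f : R -> R -> R) : R -> R -> R :=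
  match l with
  | nil => f
  | b :: l' => (if b then Pdx else Pdt) (dapply l' f)
  end.

Definition smooth2 (f : R -> R -> R) : Prop :=
  forall l : list bool,
    (forall x t, ex_derive (fun y => dapply l f y t) x /\
                 ex_derive (fun s => dapply l f x s) t) /\
    (forall x t, continuous (fun p : R * R => dapply l f (fst p) (snd p)) (x, t)).

(* det(a, b, c) for column vectors a, b, c in R^3. *)
Definition det3 (a1 a2 a3 b1 b2 b3 c1 c2 c3 : R) : R :=
  a1 * (b2 * c3 - b3 * c2) - a2 * (b1 * c3 - b3 * c1) + a3 * (b1 * c2 - b2 * c1).

From Stdlib Require Import Reals List FunctionalExtensionality Lra.
From Coquelicot Require Import Coquelicot.
Open Scope R_scope.

(* Differentiating the structure equation gamma''' = (k1 gamma)' + k2 gamma in t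
   and the flow gamma_t = gamma'' - 2/3 k1 gamma three times in x, the two
   expressions for gamma'''_t differ by beta gamma' + alpha gamma with
   beta = (k1)_t - k1'' - 2 k2'.  As det(gamma, gamma', gamma'') = 1, the
   vectors gamma, gamma' are independent, so beta = 0.  For closed curves,
   k1 = det(gamma, gamma''', gamma'') and k2 = det(gamma', gamma'', gamma''') - k1'
   are periodic, hence so is the flux k1' + 2 k2, and d/dt of the integral of k1
   over a period vanishes. *)

Lemma dapply_app l l' f : dapply (l ++ l') f = dapply l (dapply l' f).
Proof. induction l as [|b l IH]; simpl; [reflexivity | now rewrite IH]. Qed.

Lemma smooth2_Pdx f : smooth2 f -> smooth2 (Pdx f).
Proof.
  intros H l. replace (dapply l (Pdx f)) with (dapply (l ++ true :: nil) f)
    by now rewrite dapply_app. apply H.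
Qed.

Lemma smooth2_Pdt f : smooth2 f -> smooth2 (Pdt f).
Proof.
  intros H l. replace (dapply l (Pdt f)) with (dapply (l ++ false :: nil) f)
    by now rewrite dapply_app. apply H.
Qed.

Lemma smooth2_ex_derive_x f : smooth2 f -> forall x t, ex_derive (fun y => f y t) x.
Proof. intros H x t. exact (proj1 (proj1 (H nil) x t)). Qed.

Lemma smooth2_ex_derive_t f : smooth2 f -> forall x t, ex_derive (fun s => f x s) t.
Proof. intros H x t. exact (proj2 (proj1 (H nil) x t)). Qed.

Lemma smooth2_continuous f :
  smooth2 f -> forall x t, continuous (fun p : R * R => f (fst p) (snd p)) (x, t).
Proof. intros H x t. exact (proj2 (H nil) x t). Qed.

Lemma smooth2_continuous_x f : smooth2 f -> forall x t, continuous (fun y => f y t) x.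
Proof.
  intros H x t. apply (continuous_comp_2 (fun y : R => y) (fun _ : R => t) f).
  - apply continuous_id.
  - apply continuous_const.
  - apply (smooth2_continuous f H).
Qed.

Lemma continuity_2d_pt_swap F x y :
  continuity_2d_pt F x y -> continuity_2d_pt (fun u v => F v u) y x.
Proof. intros H eps. destruct (H eps) as [d Hd]. exists d. intros u v Hu Hv. now apply Hd. Qed.

Lemma Pdt_Pdx_comm f : smooth2 f -> forall x t, Pdt (Pdx f) x t = Pdx (Pdt f) x t.
Proof.
  intros H x t. unfold Pdt, Pdx. symmetry. apply Schwarz.
  - exists (mkposreal 1 Rlt_0_1). intros u v _ _. repeat split.
    + apply (smooth2_ex_derive_x f H).
    + apply (smooth2_ex_derive_t f H).
    + apply (smooth2_ex_derive_x (Pdt f) (smooth2_Pdt f H)).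
    + apply (smooth2_ex_derive_t (Pdx f) (smooth2_Pdx f H)).
  - apply continuity_2d_pt_filterlim. apply (smooth2_continuous (Pdx (Pdt f))).
    apply smooth2_Pdx, smooth2_Pdt, H.
  - apply continuity_2d_pt_filterlim. apply (smooth2_continuous (Pdt (Pdx f))).
    apply smooth2_Pdt, smooth2_Pdx, H.
Qed.

Ltac smooth2_tac := match goal with
  | |- smooth2 (Pdx ?f) => apply smooth2_Pdx; smooth2_tac
  | |- smooth2 (Pdt ?f) => apply smooth2_Pdt; smooth2_tac
  | |- smooth2 _ => assumption
  end.

Ltac ex_derive_tac := match goal with
  | |- _ /\ _ => split; ex_derive_tac
  | |- True => exact I
  | |- ex_derive (fun y => _ y ?t) _ => apply smooth2_ex_derive_x; smooth2_tac
  | |- ex_derive (fun s => _ ?x s) _ => apply smooth2_ex_derive_t; smooth2_tac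
  end.

Ltac fold_partials := repeat match goal with
  | |- context [Derive (fun y => ?F y ?t) ?x] =>
      change (Derive (fun y => F y t) x) with (Pdx F x t)
  | |- context [Derive (fun s => ?F ?x s) ?t] =>
      change (Derive (fun s => F x s) t) with (Pdt F x t)
  end.

(* Turns a goal [Derive (fun y => E y) x = rhs] into an identity between
   partial derivatives of smooth functions. *)
Ltac derive_tac := apply is_derive_unique; auto_derive; [ex_derive_tac | fold_partials].

Lemma Pdx_mult f h : smooth2 f -> smooth2 h -> forall x t,
  Pdx (fun y s => f y s * h y s) x t = Pdx f x t * h x t + f x t * Pdx h x t.
Proof. intros Hf Hh x t. unfold Pdx at 1. derive_tac. ring. Qed.

Section FlowCompatibility.

Variables g k1 k2 : R -> R -> R.
Hypotheses (Hg : smooth2 g) (Hk1 : smooth2 k1) (Hk2 : smooth2 k2).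
Hypothesis Hstruct : forall x t,
  Pdx (Pdx (Pdx g)) x t = Pdx k1 x t * g x t + k1 x t * Pdx g x t + k2 x t * g x t.
Hypothesis Hflow : forall x t, Pdt g x t = Pdx (Pdx g) x t - 2/3 * k1 x t * g x t.

Lemma Pdx_Pdt_flow : Pdx (Pdt g) = fun y s =>
  1/3 * Pdx k1 y s * g y s + 1/3 * k1 y s * Pdx g y s + k2 y s * g y s.
Proof.
  apply functional_extensionality; intro x; apply functional_extensionality; intro t.
  assert (E : Pdt g = fun y s => Pdx (Pdx g) y s - 2/3 * k1 y s * g y s).
  { do 2 (apply functional_extensionality; intro). apply Hflow. }
  rewrite E. unfold Pdx at 1. derive_tac. rewrite Hstruct. field.
Qed.

Lemma Pdx2_Pdt_flow : Pdx (Pdx (Pdt g)) = fun y s =>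
  1/3 * (Pdx (Pdx k1) y s * g y s + Pdx k1 y s * Pdx g y s)
  + 1/3 * (Pdx k1 y s * Pdx g y s + k1 y s * Pdx (Pdx g) y s)
  + Pdx k2 y s * g y s + k2 y s * Pdx g y s.
Proof.
  apply functional_extensionality; intro x; apply functional_extensionality; intro t.
  rewrite Pdx_Pdt_flow. unfold Pdx at 1. derive_tac. field.
Qed.

Lemma flow_compatibility x t :
  (Pdt k1 x t - Pdx (Pdx k1) x t - 2 * Pdx k2 x t) * Pdx g x t +
  (Pdx (Pdt k1) x t + Pdt k2 x t - 1/3 * Pdx (Pdx (Pdx k1)) x t
    - 2/3 * k1 x t * Pdx k1 x t - Pdx (Pdx k2) x t) * g x t = 0.
Proof.
  assert (Hcomm : Pdt (Pdx (Pdx (Pdx g))) x t = Pdx (Pdx (Pdx (Pdt g))) x t).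
  { assert (E1 : Pdt (Pdx g) = Pdx (Pdt g)).
    { do 2 (apply functional_extensionality; intro). now apply Pdt_Pdx_comm. }
    assert (E2 : Pdt (Pdx (Pdx g)) = Pdx (Pdx (Pdt g))).
    { do 2 (apply functional_extensionality; intro).
      rewrite Pdt_Pdx_comm by smooth2_tac. now rewrite E1. }
    rewrite Pdt_Pdx_comm by smooth2_tac. now rewrite E2. }
  assert (Hstruct_t : Pdt (Pdx (Pdx (Pdx g))) x t =
     Pdx (Pdt k1) x t * g x t + Pdx k1 x t * (Pdx (Pdx g) x t - 2/3 * k1 x t * g x t)
     + Pdt k1 x t * Pdx g x t
     + k1 x t * (1/3 * Pdx k1 x t * g x t + 1/3 * k1 x t * Pdx g x t + k2 x t * g x t)
     + Pdt k2 x t * g x t + k2 x t * (Pdx (Pdx g) x t - 2/3 * k1 x t * g x t)).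
  { assert (E : Pdx (Pdx (Pdx g)) = fun y s =>
        Pdx k1 y s * g y s + k1 y s * Pdx g y s + k2 y s * g y s).
    { do 2 (apply functional_extensionality; intro). apply Hstruct. }
    rewrite E. unfold Pdt at 1. derive_tac.
    rewrite (Pdt_Pdx_comm k1 Hk1), (Pdt_Pdx_comm g Hg), Pdx_Pdt_flow, Hflow. field. }
  assert (Hflow_xxx : Pdx (Pdx (Pdx (Pdt g))) x t =
     1/3 * (Pdx (Pdx (Pdx k1)) x t * g x t + Pdx (Pdx k1) x t * Pdx g x t)
     + 2/3 * (Pdx (Pdx k1) x t * Pdx g x t + Pdx k1 x t * Pdx (Pdx g) x t)
     + 1/3 * (Pdx k1 x t * Pdx (Pdx g) x t
              + k1 x t * (Pdx k1 x t * g x t + k1 x t * Pdx g x t + k2 x t * g x t))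
     + Pdx (Pdx k2) x t * g x t + 2 * Pdx k2 x t * Pdx g x t + k2 x t * Pdx (Pdx g) x t).
  { rewrite Pdx2_Pdt_flow. unfold Pdx at 1. derive_tac. rewrite Hstruct. field. }
  rewrite Hcomm, Hflow_xxx in Hstruct_t. lra.
Qed.

End FlowCompatibility.

Lemma det3_shear_second a1 a2 a3 b1 b2 b3 c1 c2 c3 beta alpha :
  det3 a1 a2 a3 (beta * b1 + alpha * a1) (beta * b2 + alpha * a2) (beta * b3 + alpha * a3)
       c1 c2 c3
  = beta * det3 a1 a2 a3 b1 b2 b3 c1 c2 c3.
Proof. unfold det3. ring. Qed.

Definition periodic_x (L : R) (f : R -> R -> R) : Prop := forall y t, f (y + L) t = f y t.

Lemma periodic_x_Pdx L f : periodic_x L f -> periodic_x L (Pdx f).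
Proof.
  intros H y t. unfold Pdx, Derive. f_equal. apply Lim_ext. intros h.
  replace (y + L + h) with ((y + h) + L) by ring. now rewrite !H.
Qed.

Lemma is_derive_RInt_smooth2 f a b t : smooth2 f ->
  is_derive (fun s => RInt (fun y => f y s) a b) t (RInt (fun y => Pdt f y t) a b).
Proof.
  intros Hf. apply (is_derive_RInt_param (fun u y => f y u)).
  - apply filter_forall. intros s y _. apply (smooth2_ex_derive_t f Hf).
  - intros y _. apply (continuity_2d_pt_swap (Pdt f)). apply continuity_2d_pt_filterlim.
    apply (smooth2_continuous (Pdt f)). smooth2_tac.
  - apply filter_forall. intros s. apply (@ex_RInt_continuous R_CompleteNormedModule).
    intros z _. apply (smooth2_continuous_x f Hf).
Qed.

Lemma RInt_conserved f h a b :
  smooth2 f -> (forall x t, ex_derive (fun y => h y t) x) -> (forall t, h b t = h a t) ->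
  (forall x t, Pdt f x t = Pdx h x t) ->
  forall t1 t2, RInt (fun x => f x t1) a b = RInt (fun x => f x t2) a b.
Proof.
  intros Hf Hh Hab Hcons t1 t2.
  assert (Hd0 : forall t, is_derive (fun s => RInt (fun y => f y s) a b) t 0).
  { intros t.
    replace 0 with (RInt (fun y => Pdt f y t) a b); [now apply is_derive_RInt_smooth2|].
    transitivity (RInt (Derive (fun z => h z t)) a b).
    - apply RInt_ext. intros y _. apply Hcons.
    - rewrite RInt_Derive.
      + rewrite Hab. apply Rminus_diag_eq. reflexivity.
      + intros y _. apply Hh.
      + intros y _. apply (continuous_ext (fun y => Pdt f y t)).
        * intros z. apply Hcons.
        * apply smooth2_continuous_x. smooth2_tac. }
  destruct (MVT_cor4 (fun s => RInt (fun y => f y s) a b) (fun _ => 0) t1 (Rabs (t2 - t1))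
    (fun c _ => Hd0 c) t2 (Rle_refl _)) as [c [Hc _]].
  simpl in Hc. lra.
Qed.

Section CentroaffineCurve.

Variables g1 g2 g3 k1 k2 : R -> R -> R.

Let component (g : R -> R -> R) : Prop := g = g1 \/ g = g2 \/ g = g3.
Let c1 : component g1 := or_introl eq_refl.
Let c2 : component g2 := or_intror (or_introl eq_refl).
Let c3 : component g3 := or_intror (or_intror eq_refl).

Hypothesis Harc : forall x t,
  det3 (g1 x t) (g2 x t) (g3 x t)
       (Pdx g1 x t) (Pdx g2 x t) (Pdx g3 x t)
       (Pdx (Pdx g1) x t) (Pdx (Pdx g2) x t) (Pdx (Pdx g3) x t) = 1.
Hypothesis Hstruct : forall g, component g -> forall x t,
  Pdx (Pdx (Pdx g)) x t = Pdx k1 x t * g x t + k1 x t * Pdx g x t + k2 x t * g x t.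

Lemma k1_det3 x t : k1 x t =
  det3 (g1 x t) (g2 x t) (g3 x t)
       (Pdx (Pdx (Pdx g1)) x t) (Pdx (Pdx (Pdx g2)) x t) (Pdx (Pdx (Pdx g3)) x t)
       (Pdx (Pdx g1) x t) (Pdx (Pdx g2) x t) (Pdx (Pdx g3) x t).
Proof.
  rewrite (Hstruct _ c1), (Hstruct _ c2), (Hstruct _ c3).
  rewrite <- (Rmult_1_r (k1 x t)) at 1. rewrite <- (Harc x t). unfold det3. ring.
Qed.

Lemma k2_det3 x t : k2 x t =
  det3 (Pdx g1 x t) (Pdx g2 x t) (Pdx g3 x t)
       (Pdx (Pdx g1) x t) (Pdx (Pdx g2) x t) (Pdx (Pdx g3) x t)
       (Pdx (Pdx (Pdx g1)) x t) (Pdx (Pdx (Pdx g2)) x t) (Pdx (Pdx (Pdx g3)) x t)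
  - Pdx k1 x t.
Proof.
  rewrite (Hstruct _ c1), (Hstruct _ c2), (Hstruct _ c3).
  apply (Rplus_eq_reg_r (Pdx k1 x t)).
  replace (k2 x t + Pdx k1 x t) with ((Pdx k1 x t + k2 x t) * 1) by ring.
  rewrite <- (Harc x t). unfold det3. ring.
Qed.

Section Closed.

Variable L : R.
Hypothesis Hper : forall g, component g -> periodic_x L g.

Let Hper1 g (Hg : component g) := periodic_x_Pdx L _ (Hper g Hg).
Let Hper2 g (Hg : component g) := periodic_x_Pdx L _ (Hper1 g Hg).
Let Hper3 g (Hg : component g) := periodic_x_Pdx L _ (Hper2 g Hg).

Lemma periodic_x_k1 : periodic_x L k1.
Proof.
  intros y t. rewrite (k1_det3 (y + L)), (k1_det3 y).
  now rewrite (Hper _ c1), (Hper _ c2), (Hper _ c3), (Hper2 _ c1), (Hper2 _ c2),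
    (Hper2 _ c3), (Hper3 _ c1), (Hper3 _ c2), (Hper3 _ c3).
Qed.

Lemma periodic_x_k2 : periodic_x L k2.
Proof.
  intros y t. rewrite (k2_det3 (y + L)), (k2_det3 y), (periodic_x_Pdx L k1 periodic_x_k1).
  now rewrite (Hper1 _ c1), (Hper1 _ c2), (Hper1 _ c3), (Hper2 _ c1), (Hper2 _ c2),
    (Hper2 _ c3), (Hper3 _ c1), (Hper3 _ c2), (Hper3 _ c3).
Qed.

End Closed.

Hypothesis Hsmooth : forall g, component g -> smooth2 g.
Hypotheses (Hk1 : smooth2 k1) (Hk2 : smooth2 k2).
Hypothesis Hflow : forall g, component g -> forall x t,
  Pdt g x t = Pdx (Pdx g) x t - 2/3 * k1 x t * g x t.

Lemma k1_evolution x t : Pdt k1 x t = Pdx (Pdx k1) x t + 2 * Pdx k2 x t.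
Proof.
  pose proof (fun g Hg => flow_compatibility g k1 k2 (Hsmooth g Hg) Hk1 Hk2
                (Hstruct g Hg) (Hflow g Hg) x t) as Hcompat.
  set (beta := Pdt k1 x t - Pdx (Pdx k1) x t - 2 * Pdx k2 x t) in Hcompat.
  set (alpha := Pdx (Pdt k1) x t + Pdt k2 x t - 1/3 * Pdx (Pdx (Pdx k1)) x t
    - 2/3 * k1 x t * Pdx k1 x t - Pdx (Pdx k2) x t) in Hcompat.
  assert (Hbeta : beta = 0).
  { rewrite <- (Rmult_1_r beta), <- (Harc x t), <- (det3_shear_second _ _ _ _ _ _ _ _ _ beta alpha).
    rewrite (Hcompat _ c1), (Hcompat _ c2), (Hcompat _ c3). unfold det3. ring. }
  unfold beta in Hbeta. lra.
Qed.

End CentroaffineCurve.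

Theorem mainTheorem4 (g1 g2 g3 k1 k2 : R -> R -> R)
  (Hg1 : smooth2 g1) (Hg2 : smooth2 g2) (Hg3 : smooth2 g3)
  (Hk1 : smooth2 k1) (Hk2 : smooth2 k2)
  (Harc : forall x t,
     det3 (g1 x t) (g2 x t) (g3 x t)
          (Pdx g1 x t) (Pdx g2 x t) (Pdx g3 x t)
          (Pdx (Pdx g1) x t) (Pdx (Pdx g2) x t) (Pdx (Pdx g3) x t) = 1)
  (Hinv : forall g, (g = g1 \/ g = g2 \/ g = g3) -> forall x t,
     Pdx (Pdx (Pdx g)) x t = Pdx (fun y s => k1 y s * g y s) x t + k2 x t * g x t)
  (Hflow : forall g, (g = g1 \/ g = g2 \/ g = g3) -> forall x t,
     Pdt g x t = Pdx (Pdx g) x t - 2 / 3 * k1 x t * g x t) :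
  (forall x t, Pdt k1 x t = Pdx (fun y s => Pdx k1 y s + 2 * k2 y s) x t) /\
  (forall L, 0 < L ->
     (forall g, (g = g1 \/ g = g2 \/ g = g3) -> forall x t, g (x + L) t = g x t) ->
     forall t1 t2, RInt (fun x => k1 x t1) 0 L = RInt (fun x => k1 x t2) 0 L).
Proof.
  assert (Hsmooth : forall g, (g = g1 \/ g = g2 \/ g = g3) -> smooth2 g)
    by (intros g [-> | [-> | ->]]; assumption).
  assert (Hstruct : forall g, (g = g1 \/ g = g2 \/ g = g3) -> forall x t,
    Pdx (Pdx (Pdx g)) x t = Pdx k1 x t * g x t + k1 x t * Pdx g x t + k2 x t * g x t).
  { intros g Hg x t. rewrite (Hinv g Hg), Pdx_mult by auto. reflexivity. }
  assert (Hflux : forall x t,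
    Pdx (fun y s => Pdx k1 y s + 2 * k2 y s) x t = Pdx (Pdx k1) x t + 2 * Pdx k2 x t).
  { intros x t. unfold Pdx at 1. derive_tac. ring. }
  assert (Hevol : forall x t, Pdt k1 x t = Pdx (fun y s => Pdx k1 y s + 2 * k2 y s) x t).
  { intros x t. rewrite Hflux. now apply (k1_evolution g1 g2 g3). }
  split; [exact Hevol |].
  intros L _ Hper. apply (RInt_conserved k1 (fun y s => Pdx k1 y s + 2 * k2 y s) 0 L Hk1); [| | exact Hevol].
  - intros x t. auto_derive. ex_derive_tac.
  - intros t. rewrite <- (Rplus_0_l L).
    now rewrite (periodic_x_Pdx _ _ (periodic_x_k1 g1 g2 g3 k1 k2 Harc Hstruct L Hper)),
      (periodic_x_k2 g1 g2 g3 k1 k2 Harc Hstruct L Hper).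
Qed.
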